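(* Let $(X,\pi)$ be a symmetric two-player game with relative payoff game $(X,\Delta)$. If $(X,\Delta)$ does not contain a strict improvement cycle, then it does not contain an imitation cycle.
   Context: $\pi(x,y)$ is the payoff of the player choosing $x$ against $y$; $\Delta(x,y)=\pi(x,y)-\pi(y,x)$. In the two-player game $(X,\Delta)$, at a profile $(x,y)\in X\times X$ player 1 gets $\Delta(x,y)$ and player 2 gets $\Delta(y,x)$. A sequential path is a sequence of profiles in which consecutive profiles differ in exactly one player's action; it is a strict improvement path if at each step the player who switches strictly increases her own payoff; a strict improvement cycle is a finite strict improvement path $(x_0,y_0),\dots,(x_m,y_m)$ with $(x_0,y_0)=(x_m,y_m)$. A cycle is a finite sequence of profiles $(x_0,y_0),\dots,(x_n,y_n)$, not all equal, with $(x_0,y_0)=(x_n,y_n)$; it is an imitation cycle if for all consecutive profiles $(x_t,y_t),(x_{t+1},y_{t+1})$ on it, $\Delta(x_t,y_t)>0$ and $y_{t+1}=x_t$. *)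

From mathcomp Require Import all_boot all_order all_algebra.
Set Implicit Arguments. Unset Strict Implicit. Unset Printing Implicit Defensive.
Import Order.TTheory GRing.Theory Num.Theory.
Local Open Scope ring_scope.

(* pi x y : payoff of the player choosing x against y. *)
Definition Delta (R : realDomainType) (X : Type) (pi : X -> X -> R) (x y : X) : R :=
  pi x y - pi y x.

Definition payoff1 (R : realDomainType) (X : Type) (pi : X -> X -> R) (p : X * X) : R :=
  Delta pi p.1 p.2.
Definition payoff2 (R : realDomainType) (X : Type) (pi : X -> X -> R) (p : X * X) : R :=
  Delta pi p.2 p.1.

Definition strict_improvement_step (R : realDomainType) (X : Type)
    (pi : X -> X -> R) (a b : X * X) : Prop :=
  (b.1 <> a.1 /\ b.2 = a.2 /\ payoff1 pi a < payoff1 pi b) \/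
  (b.1 = a.1 /\ b.2 <> a.2 /\ payoff2 pi a < payoff2 pi b).

Definition has_strict_improvement_cycle (R : realDomainType) (X : Type)
    (pi : X -> X -> R) : Prop :=
  exists (m : nat) (p : nat -> X * X),
    (0 < m)%N /\ p 0%N = p m /\
    forall t : nat, (t < m)%N -> strict_improvement_step pi (p t) (p t.+1).

Definition has_imitation_cycle (R : realDomainType) (X : Type)
    (pi : X -> X -> R) : Prop :=
  exists (n : nat) (p : nat -> X * X),
    (exists t : nat, (t <= n)%N /\ p t <> p 0%N) /\ p 0%N = p n /\
    forall t : nat, (t < n)%N -> 0 < Delta pi (p t).1 (p t).2 /\ (p t.+1).2 = (p t).1.

(* The first components x_0, x_1, ... of an imitation cycle, read cyclically,
   satisfy Delta(x_(s+1), x_s) > 0 for every s, because x_s is the action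
   imitated at step s+1.  Alternately letting player 1 and player 2 move along
   this sequence, (x_s, x_(s+1)) -> (x_(s+2), x_(s+1)) -> (x_(s+2), x_(s+3)),
   the mover's payoff goes from Delta(x_s, x_(s+1)) < 0 to
   Delta(x_(s+2), x_(s+1)) > 0, so going twice around the imitation cycle
   gives a strict improvement cycle. *)

From mathcomp Require Import all_boot all_order all_algebra.
From mathcomp Require Import lra.
Set Implicit Arguments. Unset Strict Implicit. Unset Printing Implicit Defensive.
Import Order.TTheory GRing.Theory Num.Theory.
Local Open Scope ring_scope.

Lemma cycle_step_mod (T : Type) (P : T -> T -> Prop) (n : nat) (p : nat -> T) :
  (0 < n)%N -> p 0%N = p n -> (forall t, (t < n)%N -> P (p t) (p t.+1)) ->
  forall t, P (p (t %% n)%N) (p (t.+1 %% n)%N).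
Proof.
move=> n_gt0 p0n step t.
have lt_tn : (t %% n < n)%N by rewrite ltn_pmod.
rewrite -addn1 -modnDml addn1.
have [lt_Stn | ge_Stn] := ltnP (t %% n).+1 n.
  by rewrite (modn_small lt_Stn); exact: step.
have Stn : (t %% n).+1 = n by apply/eqP; rewrite eqn_leq lt_tn ge_Stn.
rewrite Stn modnn p0n -[in p n]Stn; exact: step.
Qed.

Section ImprovementFromImitation.

Variables (R : realDomainType) (X : Type) (pi : X -> X -> R).

Lemma Delta_antisym (x y : X) : Delta pi y x = - Delta pi x y.
Proof. by rewrite /Delta opprB. Qed.

Lemma improve_player1 (x y z : X) :
  0 < Delta pi y x -> 0 < Delta pi z y -> strict_improvement_step pi (x, y) (z, y).
Proof.
move=> yx zy.
have lt_payoff : payoff1 pi (x, y) < payoff1 pi (z, y).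
  by rewrite /payoff1 /= Delta_antisym; lra.
left; split=> //= zx.
by move: lt_payoff; rewrite zx ltxx.
Qed.

Lemma improve_player2 (x y z : X) :
  0 < Delta pi y x -> 0 < Delta pi z y -> strict_improvement_step pi (y, x) (y, z).
Proof.
move=> yx zy.
have lt_payoff : payoff2 pi (y, x) < payoff2 pi (y, z).
  by rewrite /payoff2 /= Delta_antisym; lra.
right; split=> //; split=> //= zx.
by move: lt_payoff; rewrite zx ltxx.
Qed.

Lemma improving_sequence_cycle (n : nat) (a : nat -> X) :
  (0 < n)%N -> (forall s, a (s + n)%N = a s) ->
  (forall s, 0 < Delta pi (a s.+1) (a s)) ->
  has_strict_improvement_cycle pi.
Proof.
move=> n_gt0 a_per a_up.
have a_per2 s : a (s + n.*2)%N = a s by rewrite -addnn addnA !a_per.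
exists n.*2, (fun s => if odd s then (a s, a s.+1) else (a s.+1, a s)).
split; first by rewrite double_gt0.
split; first by rewrite /= odd_double -(a_per2 0%N) -(a_per2 1%N).
move=> s _; case: (boolP (odd s)) => [odd_s | even_s] /=.
- by rewrite odd_s; apply: improve_player1.
- by rewrite (negPf even_s); apply: improve_player2.
Qed.

End ImprovementFromImitation.

Theorem lemma4 (R : realDomainType) (X : Type) (pi : X -> X -> R) :
  ~ has_strict_improvement_cycle pi -> ~ has_imitation_cycle pi.
Proof.
move=> no_improvement_cycle [n [p [[t [le_tn pt_neq]] [p0n imitate]]]].
have n_gt0 : (0 < n)%N.
  rewrite lt0n; apply/eqP => n0.
  by move: le_tn pt_neq; rewrite n0 leqn0 => /eqP ->.
have imitate_mod := cycle_step_mod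
  (P := fun q q' => 0 < Delta pi q.1 q.2 /\ q'.2 = q.1) n_gt0 p0n imitate.
apply: no_improvement_cycle.
apply: (@improving_sequence_cycle _ _ _ n (fun s => (p (s %% n)%N).1)) => // s.
- by rewrite modnDr.
- have [_ <-] := imitate_mod s.
  by have [] := imitate_mod s.+1.
Qed.
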